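(* Let $T \in \mathbb{R}^4 \otimes \mathbb{R}^4 \otimes \mathbb{R}^4$ be the structure tensor of quaternion multiplication with respect to the basis $(1,i,j,k)$ of $\mathbb{H}$, i.e. $T = \sum_{a,b} e_a \otimes e_b \otimes c(x_a x_b)$ where $x_1,\ldots,x_4 = 1,i,j,k$ and $c : \mathbb{H} \to \mathbb{R}^4$ is the coordinate map. Then $Q(T) = 2$, and there is a neighborhood of $T$ in the Euclidean topology in which every tensor has real subrank $2$.
   Context: $\mathbb{H}$ denotes Hamilton's quaternions: the real algebra with basis $1,i,j,k$, unit $1$, $i^2=j^2=k^2=-1$, $ij=k=-ji$, $jk=i=-kj$, $ki=j=-ik$. For $r \geq 0$ let $I_r := \sum_{j=1}^r e_j \otimes e_j \otimes e_j$. The subrank of $T \in \mathbb{R}^{n_1} \otimes \mathbb{R}^{n_2} \otimes \mathbb{R}^{n_3}$ is $Q(T) := \max\{ r \mid \exists\ \mathbb{R}\text{-linear } \varphi_i : \mathbb{R}^{n_i} \to \mathbb{R}^r,\ (\varphi_1 \otimes \varphi_2 \otimes \varphi_3) T = I_r\}$. *)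

From HB Require Import structures.
From mathcomp Require Import all_boot all_order all_algebra.
From mathcomp Require Import reals.
Set Implicit Arguments. Unset Strict Implicit. Unset Printing Implicit Defensive.
Import Order.TTheory GRing.Theory Num.Theory.
Local Open Scope ring_scope.

(* A tensor in R^n1 (x) R^n2 (x) R^n3, given by its coordinates
   T a b c = coefficient of e_a (x) e_b (x) e_c. *)
Definition tensor3 (R : Type) (n1 n2 n3 : nat) := 'I_n1 -> 'I_n2 -> 'I_n3 -> R.

(* (phi1 (x) phi2 (x) phi3) T, with phi_i : R^{n_i} -> R^r given by r x n_i matrices. *)
Definition tmap3 (R : nzRingType) (n1 n2 n3 r : nat)
  (A : 'M[R]_(r, n1)) (B : 'M[R]_(r, n2)) (C : 'M[R]_(r, n3))
  (T : tensor3 R n1 n2 n3) : tensor3 R r r r :=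
  fun p q s => \sum_(a < n1) \sum_(b < n2) \sum_(c < n3)
                 A p a * B q b * C s c * T a b c.

Definition unit_tensor (R : nzRingType) (r : nat) : tensor3 R r r r :=
  fun p q s => ((p == q) && (q == s))%:R.

Definition restricts_to_unit (R : nzRingType) (n1 n2 n3 : nat)
  (T : tensor3 R n1 n2 n3) (r : nat) : Prop :=
  exists (A : 'M[R]_(r, n1)) (B : 'M[R]_(r, n2)) (C : 'M[R]_(r, n3)),
    tmap3 A B C T = @unit_tensor R r.

Definition has_subrank (R : nzRingType) (n1 n2 n3 : nat)
  (T : tensor3 R n1 n2 n3) (r : nat) : Prop :=
  restricts_to_unit T r /\ (forall r', restricts_to_unit T r' -> (r' <= r)%N).

(* Quaternion multiplication in coordinates w.r.t. the basis (1,i,j,k),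
   determined by i^2=j^2=k^2=-1, ij=k=-ji, jk=i=-kj, ki=j=-ik. *)
Definition qmul (R : nzRingType) (x y : 'I_4 -> R) : 'I_4 -> R :=
  fun c =>
  let x0 := x (inord 0) in let x1 := x (inord 1) in
  let x2 := x (inord 2) in let x3 := x (inord 3) in
  let y0 := y (inord 0) in let y1 := y (inord 1) in
  let y2 := y (inord 2) in let y3 := y (inord 3) in
  match val c with
  | 0 => x0 * y0 - x1 * y1 - x2 * y2 - x3 * y3
  | 1 => x0 * y1 + x1 * y0 + x2 * y3 - x3 * y2
  | 2 => x0 * y2 - x1 * y3 + x2 * y0 + x3 * y1
  | _ => x0 * y3 + x1 * y2 - x2 * y1 + x3 * y0
  end.

Definition e4 (R : nzRingType) (a : 'I_4) : 'I_4 -> R := fun c => (c == a)%:R.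

Definition quat_tensor (R : nzRingType) : tensor3 R 4 4 4 :=
  fun a b c => qmul (@e4 R a) (@e4 R b) c.

From HB Require Import structures.
From mathcomp Require Import all_boot all_order all_algebra.
From mathcomp Require Import reals ring lra zify.
From Stdlib Require Import FunctionalExtensionality.
Import Order.TTheory GRing.Theory Num.Theory.
Local Open Scope ring_scope.
Set Implicit Arguments. Unset Strict Implicit. Unset Printing Implicit Defensive.

(* Write T(x, y) = y L_x, with L_x the matrix of left multiplication by x.
   T restricts to I_r exactly when there are A, B, C with B L_{A_p} C^T = E_pp
   for all p; then B and C have full rank r.  If every L_x with x <> 0 is
   injective, B L_{A_0} C^T has rank 1, while Sylvester's inequality bounds its
   rank below by 2r - n3: hence 2r <= n3 + 1.  Near the quaternion tensor this
   injectivity survives because |xy| = |x||y| (Euler's four-square identity),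
   so Q <= 2 there.  Conversely, if the r^2 products A_p B_q are linearly
   independent, a dual basis of them yields C; for A = (1, i) and B = (1, j)
   the products 1, j, i, k form the standard basis, and a small perturbation
   of a permutation matrix stays invertible, so Q >= 2 near the quaternions. *)

Section LeftMultiplication.
Variables (R : comNzRingType) (n1 n2 n3 : nat) (T : tensor3 R n1 n2 n3).

Definition lmul_mx (x : 'rV[R]_n1) : 'M[R]_(n2, n3) :=
  \matrix_(b, c) \sum_(a < n1) x 0 a * T a b c.

Lemma lmul_mx0 : lmul_mx 0 = 0.
Proof. by apply/matrixP => b c; rewrite !mxE big1 // => a _; rewrite mxE mul0r. Qed.

Lemma tmap3E r (A : 'M_(r, n1)) (B : 'M_(r, n2)) (C : 'M_(r, n3)) p q s :
  tmap3 A B C T p q s = (B *m lmul_mx (row p A) *m C^T) q s.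
Proof.
have -> : (B *m lmul_mx (row p A) *m C^T) q s =
    \sum_c \sum_b \sum_a B q b * (A p a * T a b c) * C s c.
  rewrite mxE; apply: eq_bigr => c _; rewrite !mxE big_distrl /=.
  apply: eq_bigr => b _; rewrite !mxE big_distrr big_distrl /=.
  by apply: eq_bigr => a _; rewrite mxE.
rewrite /tmap3 exchange_big /=; under eq_bigr do rewrite exchange_big /=.
rewrite exchange_big /=.
apply: eq_bigr => a _; apply: eq_bigr => b _; apply: eq_bigr => c _; ring.
Qed.

Lemma restricts_to_unitP r :
  restricts_to_unit T r <->
  exists A B C, forall p : 'I_r, B *m lmul_mx (row p A) *m C^T = delta_mx p p.
Proof.
have unitE (p q s : 'I_r) : ((p == q) && (q == s)) = ((q == p) && (s == p)).
  by case: (eqVneq q p) => [->|qp]; rewrite eq_sym ?eqxx ?(negbTE qp).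
split=> [[A [B [C ABC]]] | [A [B [C slices]]]]; exists A, B, C.
  by move=> p; apply/matrixP => q s; rewrite -tmap3E ABC mxE /unit_tensor unitE.
do 3!apply: functional_extensionality => ?.
by rewrite tmap3E slices mxE /unit_tensor unitE.
Qed.

Definition products_mx r (A : 'M_(r, n1)) (B : 'M_(r, n2)) : 'M[R]_(n3, r * r) :=
  \matrix_c mxvec (\matrix_(p, q) (row q B *m lmul_mx (row p A)) 0 c).

Lemma products_mxE r (A : 'M_(r, n1)) (B : 'M_(r, n2)) c p q :
  products_mx A B c (mxvec_index p q) = (row q B *m lmul_mx (row p A)) 0 c.
Proof. by rewrite mxE mxvecE mxE. Qed.

Lemma products_mx_rowsub1 r (a : 'I_r -> 'I_n1) (b : 'I_r -> 'I_n2) c p q :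
  products_mx (rowsub a 1%:M) (rowsub b 1%:M) c (mxvec_index p q) = T (a p) (b q) c.
Proof.
rewrite products_mxE !row_rowsub !row1 -rowE !mxE (bigD1 (a p)) //= big1 => [|a' a'p].
  by rewrite mxE !eqxx mul1r addr0.
by rewrite mxE (negbTE a'p) andbF mul0r.
Qed.

End LeftMultiplication.

Lemma mxvec_index_eq m n (i i' : 'I_m) (j j' : 'I_n) :
  (mxvec_index i j == mxvec_index i' j') = ((i, j) == (i', j')).
Proof. by rewrite /mxvec_index (inj_eq (@cast_ord_inj _ _ _)) (inj_eq enum_rank_inj). Qed.

Section UnitSlices.
Variables (F : fieldType) (n1 n2 n3 r : nat) (T : tensor3 F n1 n2 n3).
Variables (A : 'M[F]_(r, n1)) (B : 'M[F]_(r, n2)) (C : 'M[F]_(r, n3)).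
Hypothesis slices : forall p, B *m lmul_mx T (row p A) *m C^T = delta_mx p p.

Lemma unit_slices_row_freeB : row_free B.
Proof.
apply/row_freeP; exists (\matrix_(b, q) (lmul_mx T (row q A) *m C^T) b q).
apply/matrixP => q' q; transitivity ((B *m (lmul_mx T (row q A) *m C^T)) q' q).
  by rewrite !mxE; apply: eq_bigr => b _; rewrite mxE.
by rewrite mulmxA slices !mxE eqxx andbT.
Qed.

Lemma unit_slices_row_freeC : row_free C.
Proof.
rewrite /row_free -mxrank_tr; apply/row_fullP.
exists (\matrix_(q, c) (B *m lmul_mx T (row q A)) q c).
apply/matrixP => q s; transitivity ((B *m lmul_mx T (row q A) *m C^T) q s).
  by rewrite !mxE; apply: eq_bigr => c _; rewrite mxE.
by rewrite slices !mxE eqxx eq_sym.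
Qed.

Lemma unit_slices_rowA_neq0 p : row p A != 0.
Proof.
apply/eqP => Ap0; have /matrixP/(_ p p)/eqP := slices p.
by rewrite Ap0 lmul_mx0 mulmx0 mul0mx !mxE !eqxx eq_sym oner_eq0.
Qed.

End UnitSlices.

Lemma restricts_to_unit_le (F : fieldType) n1 n2 n3 (T : tensor3 F n1 n2 n3) r :
  (forall x : 'rV_n1, x != 0 -> row_free (lmul_mx T x)) ->
  restricts_to_unit T r -> (2 * r <= n3 + 1)%N.
Proof.
move=> lmul_free /restricts_to_unitP [A [B [C slices]]].
case: r A B C slices => [//|r] A B C slices.
have := mxrank_mul_min (B *m lmul_mx T (row 0 A)) C^T.
rewrite slices mxrank_delta mxrankMfree ?lmul_free ?(unit_slices_rowA_neq0 slices) //.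
rewrite mxrank_tr (eqP (unit_slices_row_freeB slices)) (eqP (unit_slices_row_freeC slices)).
lia.
Qed.

Lemma restricts_to_unit_of_row_full (F : fieldType) n1 n2 n3 (T : tensor3 F n1 n2 n3) r
    (A : 'M_(r, n1)) (B : 'M_(r, n2)) :
  row_full (products_mx T A B) -> restricts_to_unit T r.
Proof.
case/row_fullP => X XP; apply/restricts_to_unitP.
exists A, B, (\matrix_(s, c) X (mxvec_index s s) c) => p.
apply/matrixP => q s; rewrite [RHS]mxE.
transitivity ((X *m products_mx T A B) (mxvec_index s s) (mxvec_index p q)).
  rewrite !mxE; apply: eq_bigr => c _.
  by rewrite products_mxE -row_mul !mxE mulrC.
rewrite XP mxE mxvec_index_eq xpair_eqE.
by case: (eqVneq s p) => [->|sp]; rewrite ?eqxx ?andbT ?andbF // eq_sym.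
Qed.

Lemma norm_sum_mul_le (R : numDomainType) (I : finType) (u d : I -> R) e :
  (forall i, `|d i| <= e) -> `|\sum_i u i * d i| <= e * \sum_i `|u i|.
Proof.
move=> d_le; rewrite mulr_sumr; apply: le_trans (ler_norm_sum _ _ _) _.
by apply: ler_sum => i _; rewrite normrM mulrC ler_wpM2r.
Qed.

Lemma lmul_mx_dist_le (R : numDomainType) n1 n2 n3 (S T : tensor3 R n1 n2 n3) eps
    (x : 'rV_n1) (y : 'rV_n2) c :
  (forall a b, `|S a b c - T a b c| <= eps) ->
  `|(y *m lmul_mx S x) 0 c - (y *m lmul_mx T x) 0 c|
    <= eps * (\sum_a `|x 0 a|) * \sum_b `|y 0 b|.
Proof.
move=> near; rewrite !mxE -sumrB.
under eq_bigr do rewrite !mxE -mulrBr -sumrB.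
under eq_bigr do under eq_bigr do rewrite -mulrBr.
by apply: norm_sum_mul_le => b; apply: norm_sum_mul_le => a.
Qed.

Lemma unitmx_near_perm (R : realFieldType) n (s : 'I_n -> 'I_n) (M : 'M[R]_n) eps :
  injective s -> (forall i j, `|M i j - (s i == j)%:R| <= eps) -> n%:R * eps < 1 ->
  M \in unitmx.
Proof.
move=> s_inj near small; rewrite -row_free_unit; apply: inj_row_free => v vM0.
pose N := \sum_i `|v 0 i|.
have coord_le i : `|v 0 i| <= eps * N.
  have -> : v 0 i = - \sum_j v 0 j * (M j (s i) - (s j == s i)%:R).
    under eq_bigr do rewrite mulrBr.
    rewrite sumrB.
    have -> : \sum_j v 0 j * M j (s i) = 0.
      by have := congr1 (fun A : 'M_(1, n) => A 0 (s i)) vM0; rewrite !mxE.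
    rewrite (bigD1 i) //= big1 => [|j ji]; first by rewrite eqxx mulr1 addr0 sub0r opprK.
    by rewrite (inj_eq s_inj) (negbTE ji) mulr0.
  by rewrite normrN; apply: norm_sum_mul_le.
have N_le : N <= n%:R * eps * N.
  apply: le_trans (ler_sum _ (fun i _ => coord_le i)) _.
  by rewrite sumr_const card_ord -[_ *+ n]mulr_natl mulrA.
have N_ge0 : 0 <= N by apply: sumr_ge0.
have N0 : N = 0 by nra.
apply/rowP => i; rewrite mxE; apply/normr0_eq0/le_anti.
by rewrite normr_ge0 andbT; have := coord_le i; rewrite N0 mulr0.
Qed.

Lemma sqr_sum_norm_le (R : realDomainType) n (v : 'I_n -> R) :
  (\sum_i `|v i|) ^+ 2 <= n%:R * \sum_i v i ^+ 2.
Proof.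
case: n v => [|n] v; first by rewrite !big_ord0 expr0n mulr0.
set S := \sum_i `|v i|; set Q := \sum_i v i ^+ 2.
have dev_eq : \sum_i (n.+1%:R * `|v i| - S) ^+ 2 = n.+1%:R * (n.+1%:R * Q - S ^+ 2).
  under eq_bigr do rewrite sqrrB exprMn (real_normK (num_real _)).
  rewrite !big_split /= sumrN sumrMnl -!mulr_suml -!mulr_sumr sumr_const card_ord.
  by rewrite -/Q -/S; ring.
have : 0 <= \sum_i (n.+1%:R * `|v i| - S) ^+ 2 by apply: sumr_ge0 => i _; exact: sqr_ge0.
by rewrite dev_eq pmulr_rge0 ?ltr0Sn // subr_ge0.
Qed.

Lemma sumr_sqr_eq0 (R : realDomainType) n (v : 'rV[R]_n) :
  (\sum_i v 0 i ^+ 2 == 0) = (v == 0).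
Proof.
apply/eqP/eqP => [v0 | ->]; last by rewrite big1 // => i _; rewrite mxE expr0n.
apply/rowP => i; rewrite mxE; apply/eqP; rewrite -sqrf_eq0.
by rewrite (psumr_eq0P _ v0) // => j _; exact: sqr_ge0.
Qed.

(* [qmul] reads coordinates at [inord k], which does not reduce (its proof
   part is opaque), hence this rewrite rule. *)
Definition inord4E :=
  (inord_val (@Ordinal 4 0 isT), inord_val (@Ordinal 4 1 isT),
   inord_val (@Ordinal 4 2 isT), inord_val (@Ordinal 4 3 isT)).

Lemma big_ord4 (V : nmodType) (F : 'I_4 -> V) :
  \sum_(i < 4) F i = F (inord 0) + F (inord 1) + F (inord 2) + F (inord 3).
Proof.
rewrite !big_ord_recl big_ord0 addr0 !addrA !inord4E.
by congr (_ + _ + _ + _); congr F; apply: val_inj.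
Qed.

Lemma euler_four_square (R : comNzRingType) (x y : 'I_4 -> R) :
  \sum_c qmul x y c ^+ 2 = (\sum_a x a ^+ 2) * \sum_b y b ^+ 2.
Proof. by rewrite !big_ord4 /qmul !inord4E /=; ring. Qed.

Lemma lmul_quat_tensorE (R : comNzRingType) (x y : 'rV[R]_4) c :
  (y *m lmul_mx (@quat_tensor R) x) 0 c = qmul (x 0) (y 0) c.
Proof.
rewrite mxE; under eq_bigr do rewrite mxE.
rewrite !big_ord4 /quat_tensor /qmul /e4 !inord4E.
by case: c => [[|[|[|[|//]]]] ?] /=; ring.
Qed.

Fact quat_idx_subproof (p q : 'I_2) : (p + 2 * q < 4)%N.
Proof. by case: p q => [[|[|//]] ?] [[|[|//]] ?]. Qed.

(* [quat_idx p q] is the index of i^p j^q in the basis (1, i, j, k). *)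
Definition quat_idx (p q : 'I_2) : 'I_4 := Ordinal (quat_idx_subproof p q).

Lemma quat_tensor_idx (R : comNzRingType) (p q : 'I_2) c :
  @quat_tensor R (quat_idx p 0) (quat_idx 0 q) c = (c == quat_idx p q)%:R.
Proof.
case: p q c => [[|[|//]] ?] [[|[|//]] ?] [[|[|[|[|//]]]] ?];
  by rewrite /quat_tensor /qmul /e4 !inord4E /=; ring.
Qed.

Fact quat_bit1_subproof (c : 'I_4) : (c./2 < 2)%N.
Proof. by case: c => [[|[|[|[|//]]]] ?]. Qed.

Definition quat_bits (c : 'I_4) : 'I_2 * 'I_2 :=
  (Ordinal (ltn_pmod c (isT : (0 < 2)%N)), Ordinal (quat_bit1_subproof c)).

Lemma quat_bitsK : cancel quat_bits (uncurry quat_idx).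
Proof. by case=> [[|[|[|[|//]]]] ?]; apply: val_inj. Qed.

Lemma quat_bits_eq c p q : (quat_bits c == (p, q)) = (c == quat_idx p q).
Proof. by case: c p q => [[|[|[|[|//]]]] ?] [[|[|//]] ?] [[|[|//]] ?]. Qed.

Lemma quat_near_products_unitmx (R : realFieldType) (S : tensor3 R 4 4 4) eps :
  4 * eps < 1 -> (forall a b c, `|S a b c - quat_tensor R a b c| <= eps) ->
  products_mx S (rowsub (quat_idx^~ 0) 1%:M) (rowsub (quat_idx 0) 1%:M) \in unitmx.
Proof.
move=> small near.
(* Size [2 * 2] rather than [4], so that [==] on indices is keyed on the type
   ['I_(2 * 2)] of [mxvec_index] and [mxvec_index_eq] can rewrite it. *)
apply: (@unitmx_near_perm R (2 * 2) (uncurry (@mxvec_index 2 2) \o quat_bits) _ eps) => //.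
  apply: inj_comp (can_inj quat_bitsK).
  by move=> [i j] [i' j'] /= /eqP; rewrite mxvec_index_eq => /eqP.
move=> c k; case/mxvec_indexP: k => p q.
have -> : ((uncurry (@mxvec_index 2 2) \o quat_bits) c == mxvec_index p q)
    = (c == quat_idx p q :> 'I_4).
  by rewrite -quat_bits_eq /comp; case: (quat_bits c) => i j; exact: mxvec_index_eq.
by rewrite products_mx_rowsub1 -quat_tensor_idx.
Qed.

Lemma quat_near_lmul_row_free (R : realFieldType) (S : tensor3 R 4 4 4) eps :
  8 * eps < 1 -> (forall a b c, `|S a b c - quat_tensor R a b c| <= eps) ->
  forall x : 'rV_4, x != 0 -> row_free (lmul_mx S x).
Proof.
move=> small near x x_neq0; apply: inj_row_free => y yS0.
set X1 := \sum_a `|x 0 a|; set Y1 := \sum_b `|y 0 b|.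
set X2 := \sum_a x 0 a ^+ 2; set Y2 := \sum_b y 0 b ^+ 2.
have eps_ge0 : 0 <= eps by apply: le_trans (near 0 0 0); exact: normr_ge0.
have qmul_le c : qmul (x 0) (y 0) c ^+ 2 <= (eps * X1 * Y1) ^+ 2.
  have near' a b : `|quat_tensor R a b c - S a b c| <= eps by rewrite distrC.
  have := lmul_mx_dist_le x y near'.
  have -> : (y *m lmul_mx S x) 0 c = 0 by rewrite yS0 mxE.
  rewrite subr0 lmul_quat_tensorE -/X1 -/Y1 => le.
  have K_ge0 := le_trans (normr_ge0 _) le.
  by rewrite -(real_normK (num_real _)) ler_sqr ?nnegrE ?normr_ge0.
have X2Y2_le : X2 * Y2 <= 4 * (eps * X1 * Y1) ^+ 2.
  rewrite -euler_four_square; apply: le_trans (ler_sum _ (fun c _ => qmul_le c)) _.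
  by rewrite sumr_const card_ord mulr_natl.
have X1Y1_le : (X1 * Y1) ^+ 2 <= 16 * (X2 * Y2).
  have := ler_pM (sqr_ge0 X1) (sqr_ge0 Y1) (sqr_sum_norm_le (x 0)) (sqr_sum_norm_le (y 0)).
  by rewrite -/X1 -/Y1 -/X2 -/Y2 exprMn => le; apply: le_trans le _; lra.
have X2_gt0 : 0 < X2.
  by rewrite lt_def sumr_sqr_eq0 x_neq0 sumr_ge0 // => a _; exact: sqr_ge0.
have Y2_ge0 : 0 <= Y2 by apply: sumr_ge0 => b _; exact: sqr_ge0.
have small2 : 64 * eps ^+ 2 < 1 by nra.
have Z_le : X2 * Y2 <= 64 * eps ^+ 2 * (X2 * Y2).
  by have := ler_wpM2l (sqr_ge0 eps) X1Y1_le; lra.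
have Z_le0 : X2 * Y2 <= 0 by nra.
have Y2_le0 : Y2 <= 0 by rewrite -(pmulr_rle0 _ X2_gt0).
by apply/eqP; rewrite -sumr_sqr_eq0 -/Y2 eq_le Y2_le0 Y2_ge0.
Qed.

Lemma quat_near_has_subrank (R : realFieldType) (S : tensor3 R 4 4 4) eps :
  8 * eps < 1 -> (forall a b c, `|S a b c - quat_tensor R a b c| <= eps) ->
  has_subrank S 2.
Proof.
move=> small near; have eps_ge0 : 0 <= eps by apply: le_trans (near 0 0 0).
split.
  apply: restricts_to_unit_of_row_full; rewrite row_full_unit.
  by apply: quat_near_products_unitmx near; lra.
move=> r /(restricts_to_unit_le (quat_near_lmul_row_free small near)); lia.
Qed.

Theorem lemma4p12 (R : realType) :
  has_subrank (@quat_tensor R) 2 /\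
  exists eps : R, 0 < eps /\
    forall S : tensor3 R 4 4 4,
      (forall a b c, `|S a b c - @quat_tensor R a b c| < eps) ->
      has_subrank S 2.
Proof.
have near_subrank S : (forall a b c, `|S a b c - quat_tensor R a b c| < 1 / 16) ->
    has_subrank S 2.
  by move=> near; apply: (@quat_near_has_subrank _ _ (1 / 16)) => [|a b c]; [lra | exact/ltW].
split; first by apply: near_subrank => a b c; rewrite subrr normr0; lra.
by exists (1 / 16); split; [lra | exact: near_subrank].
Qed.
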